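(* Let $v\in\Sigma^*$, let $u$ be a $v$-minimal word, $i\in\mathrm{supp}(u)$, and let $w$ be a word that $u$-represents $g\in\mathcal{I}_i$. Then for any $a,b\in\Sigma^*$ the word $awb$ $u$-represents $\theta_i(a)\,g\,\theta_i(b)$.
   Context: Let $\mathcal{A}=\langle Q,\Sigma,\delta\rangle$ be a synchronizing automaton with $n$ states $q_1,\dots,q_n$; write $q\cdot u$ for the action of $u\in\Sigma^*$ and $\mathrm{rk}(u)=|Q\cdot u|$. Each word acts linearly on $\mathbb{C}Q$ by $q\mapsto q\cdot u$, preserving $w^\perp=\{x:\langle x,q_1+\dots+q_n\rangle=0\}$; let $\rho:\Sigma^*\to\mathbb{M}_{n-1}(\mathbb{C})$ be the induced representation, $\mathcal{R}$ the $\mathbb{C}$-algebra generated by $\rho(\Sigma^* )$. Write $\mathcal{R}/\mathrm{Rad}(\mathcal{R})\cong\prod_{i=1}^k\mathbb{M}_{n_i}(\mathbb{C})$ (Jacobson radical, Wedderburn–Artin) and let $\theta_i:\Sigma^*\to\mathbb{M}_{n_i}(\mathbb{C})$ be $\rho$ followed by the quotient map and the $i$-th projection; $0_i$ is the zero matrix. The monoid $\theta_i(\Sigma^* )$ has a unique $0$-minimal ideal $\mathcal{I}_i$. The support of a word $z$ is $\mathrm{supp}(z)=\{i:\theta_i(z)\neq0_i\}$. For $v\in\Sigma^*$, a word $u\in\Sigma^*v\Sigma^*$ is $v$-minimal if $\mathrm{supp}(u)\neq\emptyset$ and there is no $z\in\Sigma^*v\Sigma^*$ with $\emptyset\neq\mathrm{supp}(z)\subsetneq\mathrm{supp}(u)$.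 For such $u$, $i\in\mathrm{supp}(u)$ and $g\in\mathcal{I}_i$, a word $w$ $u$-represents $g$ if $w\in\Sigma^*u\Sigma^*$, $\theta_i(w)=g$, and either $g=0_i$ or $\mathrm{rk}(w)$ is minimum among all words $w'\in\Sigma^*u\Sigma^*$ with $\theta_i(w')=g$. *)

From mathcomp Require Import all_boot all_order all_algebra.
From mathcomp Require Import Rstruct complex.
Set Implicit Arguments. Unset Strict Implicit. Unset Printing Implicit Defensive.
Import GRing.Theory.
Local Open Scope ring_scope.

Definition CC : numClosedFieldType := (Rdefinitions.R)[i].

Section Automaton.
(* An automaton with n = m.+1 states 'I_m.+1 (q_1,...,q_n), finite alphabet
   Sigma, transition function delta.  Words are seq Sigma. *)
Variables (Sigma : finType) (m : nat) (delta : 'I_m.+1 -> Sigma -> 'I_m.+1).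

Definition act (q : 'I_m.+1) (u : seq Sigma) : 'I_m.+1 := foldl delta q u.

Definition rk (u : seq Sigma) : nat := #|[set act q u | q : 'I_m.+1]|.

Definition synchronizing : Prop := exists u : seq Sigma, rk u = 1%N.

(* The representation rho : Sigma^* -> M_{n-1}(C) induced on
   w^perp = {x : <x, q_1 + ... + q_n> = 0}, written in the basis
   b_j = q_j - q_n (j < n-1), with the row-vector convention
   x |-> x *m rho u (so that rho (u ++ v) = rho u *m rho v, matching the
   right action q |-> q . u).  Since b_j . u = q_{j.u} - q_{n.u}, the
   coordinates are the first n-1 entries. *)
Definition rho (u : seq Sigma) : 'M[CC]_m :=
  \matrix_(j < m, l < m)
    (((act (widen_ord (leqnSn m) j) u == widen_ord (leqnSn m) l) : nat)%:R
     - ((act ord_max u == widen_ord (leqnSn m) l) : nat)%:R).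

End Automaton.

Section Algebra.
Variable m : nat.

Definition is_subalgebra (S : 'M[CC]_m -> Prop) : Prop :=
  [/\ S 1%:M,
      (forall A B, S A -> S B -> S (A + B)),
      (forall (c : CC) A, S A -> S (c *: A)) &
      (forall A B, S A -> S B -> S (A *m B))].

Definition gen_alg (X : 'M[CC]_m -> Prop) (A : 'M[CC]_m) : Prop :=
  forall S, is_subalgebra S -> (forall B, X B -> S B) -> S A.

Definition left_ideal (S L : 'M[CC]_m -> Prop) : Prop :=
  [/\ (forall x, L x -> S x), L 0,
      (forall x y, L x -> L y -> L (x - y)) &
      (forall r x, S r -> L x -> L (r *m x))].

Definition maximal_left_ideal (S L : 'M[CC]_m -> Prop) : Prop :=
  [/\ left_ideal S L, (exists x, S x /\ ~ L x) &
      (forall L', left_ideal S L' -> (forall x, L x -> L' x) ->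
         (forall x, L' x -> L x) \/ (forall x, S x -> L' x))].

Definition jacobson_radical (S : 'M[CC]_m -> Prop) (x : 'M[CC]_m) : Prop :=
  S x /\ forall L, maximal_left_ideal S L -> L x.

(* Wedderburn-Artin data: phi = (phi_i)_{i<k} restricted to S is a surjective
   unital C-algebra morphism S -> prod_i M_{n_i}(C) whose kernel is Rad(S);
   i.e. it induces an isomorphism S/Rad(S) ~= prod_i M_{n_i}(C), and phi_i is
   the quotient map followed by the i-th projection. *)
Definition wedderburn_artin (S : 'M[CC]_m -> Prop) (k : nat) (nn : 'I_k -> nat)
    (phi : forall i : 'I_k, 'M[CC]_m -> 'M[CC]_(nn i)) : Prop :=
  (forall i, (0 < nn i)%N) /\
  [/\ forall i, phi i 1%:M = 1%:M,
      forall i (c : CC) A B, S A -> S B -> phi i (c *: A + B) = c *: phi i A + phi i B,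
      forall i A B, S A -> S B -> phi i (A *m B) = phi i A *m phi i B,
      (forall B : (forall i : 'I_k, 'M[CC]_(nn i)),
         exists2 A, S A & forall i, phi i A = B i) &
      forall A, S A -> ((forall i, phi i A = 0) <-> jacobson_radical S A)].

End Algebra.

Section Monoid.
Variable p : nat.
Definition monoid_ideal (M J : 'M[CC]_p -> Prop) : Prop :=
  [/\ (forall x, J x -> M x), (exists x, J x) &
      (forall s x t, M s -> J x -> M t -> J (s *m x *m t))].

Definition zero_minimal_ideal (M J : 'M[CC]_p -> Prop) : Prop :=
  [/\ monoid_ideal M J, (exists x, J x /\ x <> 0) &
      (forall K, monoid_ideal M K -> (forall x, K x -> J x) ->
         (forall x, K x -> x = 0) \/ (forall x, J x -> K x))].

Definition the_zero_minimal_ideal (M J : 'M[CC]_p -> Prop) : Prop :=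
  zero_minimal_ideal M J /\
  forall J', zero_minimal_ideal M J' -> forall x, J' x <-> J x.
End Monoid.

Section Main.
Variables (Sigma : finType) (m : nat) (delta : 'I_m.+1 -> Sigma -> 'I_m.+1).
Variables (k : nat) (nn : 'I_k -> nat)
          (phi : forall i : 'I_k, 'M[CC]_m -> 'M[CC]_(nn i)).

Definition RR : 'M[CC]_m -> Prop :=
  gen_alg (fun A => exists u : seq Sigma, A = rho delta u).

Definition theta (i : 'I_k) (u : seq Sigma) : 'M[CC]_(nn i) := phi i (rho delta u).

Definition theta_monoid (i : 'I_k) (X : 'M[CC]_(nn i)) : Prop :=
  exists u : seq Sigma, X = theta i u.

Definition supp (z : seq Sigma) : {set 'I_k} := [set i | theta i z != 0].

Definition v_minimal (v u : seq Sigma) : Prop :=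
  [/\ infix v u, supp u != set0 &
      ~ exists z, [/\ infix v z, supp z != set0 & supp z \proper supp u]].

(* w u-represents g in I_i (J stands for I_i) *)
Definition u_represents (i : 'I_k) (J : 'M[CC]_(nn i) -> Prop) (u : seq Sigma)
    (w : seq Sigma) (g : 'M[CC]_(nn i)) : Prop :=
  [/\ J g, infix u w, theta i w = g &
      (g = 0 \/ forall w', infix u w' -> theta i w' = g -> (rk delta w <= rk delta w')%N)].
End Main.

Arguments theta_monoid {Sigma m} delta {k nn} phi i X.
Arguments u_represents {Sigma m} delta {k nn} phi i J u w g.
Arguments theta {Sigma m} delta {k nn} phi i u.

(* theta_i is a monoid morphism on words, so a*w*b contains u and has image
   theta_i(a) g theta_i(b), which lies in the ideal I_i.  If this image h is
   non-zero, 0-minimality of I_i makes I_i the ideal generated by h, hence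
   g = theta_i(c) h theta_i(d).  Then any w' containing u with image h gives
   the word c*w'*d containing u with image g, so by the minimality of rk(w)
   and since the rank of a word is at most the rank of each of its factors,
   rk(a*w*b) <= rk(w) <= rk(c*w'*d) <= rk(w'). *)
From mathcomp Require Import all_boot all_order all_algebra.
From mathcomp Require Import Rstruct complex.
Set Implicit Arguments. Unset Strict Implicit. Unset Printing Implicit Defensive.
Import GRing.Theory.
Local Open Scope ring_scope.

Lemma sum_widen_indicator (R : nzRingType) (m : nat) (x : 'I_m.+1)
    (f : 'I_m.+1 -> R) :
  f ord_max = 0 ->
  \sum_(p < m) ((x == widen_ord (leqnSn m) p) : nat)%:R * f (widen_ord (leqnSn m) p)
  = f x.
Proof.
move=> f_max0.
transitivity (\sum_(p < m.+1) ((x == p) : nat)%:R * f p).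
  by rewrite big_ord_recr /= f_max0 mulr0 addr0.
rewrite (bigD1 x) //= eqxx mul1r big1 ?addr0 // => p /negPf.
by rewrite eq_sym => ->; rewrite mul0r.
Qed.

Section Words.
Variables (Sigma : finType) (m : nat) (delta : 'I_m.+1 -> Sigma -> 'I_m.+1).
Implicit Types x y z : seq Sigma.

Lemma act_cat q x y : act delta q (x ++ y) = act delta (act delta q x) y.
Proof. exact: foldl_cat. Qed.

Lemma rk_catl x y : (rk delta (x ++ y) <= rk delta y)%N.
Proof.
apply: subset_leq_card; apply/subsetP => _ /imsetP[q _ ->].
by rewrite act_cat imset_f.
Qed.

Lemma rk_catr x y : (rk delta (x ++ y) <= rk delta x)%N.
Proof.
rewrite /rk (_ : [set _ | q : 'I_m.+1] =
  (act delta ^~ y) @: [set act delta q x | q : 'I_m.+1]).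
  exact: leq_imset_card.
by rewrite -imset_comp; apply: eq_imset => q; rewrite /= act_cat.
Qed.

Lemma leq_rk_infix x y : infix x y -> (rk delta y <= rk delta x)%N.
Proof.
case/infixP=> [s [s' ->]].
exact: leq_trans (rk_catl s (x ++ s')) (rk_catr x s').
Qed.

Lemma rho_nil : rho delta [::] = 1%:M.
Proof.
apply/matrixP => j l; rewrite !mxE /act /=.
have -> : (ord_max == widen_ord (leqnSn m) l) = false.
  apply/negbTE/eqP => /(congr1 val) /= max_l.
  by move: (ltn_ord l); rewrite -max_l ltnn.
have -> : (widen_ord (leqnSn m) j == widen_ord (leqnSn m) l) = (j == l).
  by apply/eqP/eqP => [/(congr1 val) /= /val_inj|->].
by rewrite subr0; case: (j == l).
Qed.

Lemma rho_cat x y : rho delta (x ++ y) = rho delta x *m rho delta y.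
Proof.
apply/matrixP => j l; rewrite !mxE.
under eq_bigr => p _ do rewrite !mxE mulrBl.
pose f q : CC := ((act delta q y == widen_ord (leqnSn m) l) : nat)%:R
                 - ((act delta ord_max y == widen_ord (leqnSn m) l) : nat)%:R.
have f_max0 : f ord_max = 0 by rewrite /f subrr.
rewrite sumrB !(sum_widen_indicator _ f_max0) /f !act_cat.
by rewrite opprB addrA subrK.
Qed.

End Words.

Section ZeroMinimalIdeal.
Variables (p : nat) (M J : 'M[CC]_p -> Prop).
Hypotheses (M1 : M 1%:M) (MM : forall s t, M s -> M t -> M (s *m t)).

Lemma zero_minimal_ideal_principal h g :
  zero_minimal_ideal M J -> J h -> h <> 0 -> J g ->
  exists s t, [/\ M s, M t & g = s *m h *m t].
Proof.
case=> [[JM _ J_ideal] _ J_min] Jh h_neq0.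
pose K x := exists s t, [/\ M s, M t & x = s *m h *m t].
have Kh : K h by exists 1%:M, 1%:M; rewrite mul1mx mulmx1.
have KJ x : K x -> J x by case=> [s [t [Ms Mt ->]]]; apply: J_ideal.
have K_ideal : monoid_ideal M K.
  split; [by move=> x /KJ /JM | by exists h |].
  move=> s _ t Ms [s' [t' [Ms' Mt' ->]]] Mt.
  exists (s *m s'), (t' *m t).
  by split; [exact: MM | exact: MM | rewrite !mulmxA].
by case: (J_min K K_ideal KJ) => [/(_ h Kh)//|]; apply.
Qed.

End ZeroMinimalIdeal.

Section Theta.
Variables (Sigma : finType) (m : nat) (delta : 'I_m.+1 -> Sigma -> 'I_m.+1).
Variables (k : nat) (nn : 'I_k -> nat)
          (phi : forall i : 'I_k, 'M[CC]_m -> 'M[CC]_(nn i)).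
Hypothesis HWA : wedderburn_artin (RR delta) phi.
Variable i : 'I_k.
Local Notation th := (theta delta phi i).
Implicit Types x y z : seq Sigma.

Lemma RR_rho x : RR delta (rho delta x).
Proof. by move=> S _; apply; exists x. Qed.

Lemma theta_nil : th [::] = 1%:M.
Proof. by case: HWA => _ [phi1 _ _ _ _]; rewrite /theta rho_nil phi1. Qed.

Lemma theta_cat x y : th (x ++ y) = th x *m th y.
Proof.
case: HWA => _ [_ _ phiM _ _].
by rewrite /theta rho_cat (phiM _ _ _ (RR_rho x) (RR_rho y)).
Qed.

Lemma theta_cat3 x y z : th (x ++ y ++ z) = th x *m th y *m th z.
Proof. by rewrite !theta_cat mulmxA. Qed.

Lemma theta_monoid_theta x : theta_monoid delta phi i (th x).
Proof. by exists x. Qed.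

Lemma theta_zero_minimal_ideal_principal (J : 'M[CC]_(nn i) -> Prop) h g :
  zero_minimal_ideal (theta_monoid delta phi i) J -> J h -> h <> 0 -> J g ->
  exists x y, g = th x *m h *m th y.
Proof.
move=> J_min Jh h_neq0 Jg.
have M1 : theta_monoid delta phi i 1%:M by exists [::]; rewrite theta_nil.
have MM s t : theta_monoid delta phi i s -> theta_monoid delta phi i t ->
    theta_monoid delta phi i (s *m t).
  by case=> [x ->] [y ->]; exists (x ++ y); rewrite theta_cat.
have [_ [_ [[x ->] [y ->] ->]]] :=
  zero_minimal_ideal_principal M1 MM J_min Jh h_neq0 Jg.
by exists x, y.
Qed.

End Theta.

Theorem mainTheorem6 (Sigma : finType) (m : nat)
    (delta : 'I_m.+1 -> Sigma -> 'I_m.+1)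
    (Hsync : synchronizing delta)
    (k : nat) (nn : 'I_k -> nat)
    (phi : forall i : 'I_k, 'M[CC]_m -> 'M[CC]_(nn i))
    (HWA : wedderburn_artin (RR delta) phi)
    (v u : seq Sigma) (Hu : v_minimal delta phi v u)
    (i : 'I_k) (Hi : i \in supp delta phi u)
    (J : 'M[CC]_(nn i) -> Prop)
    (HJ : the_zero_minimal_ideal (theta_monoid delta phi i) J)
    (g : 'M[CC]_(nn i)) (w : seq Sigma)
    (Hw : u_represents delta phi i J u w g)
    (a b : seq Sigma) :
  u_represents delta phi i J u (a ++ w ++ b)
    (theta delta phi i a *m g *m theta delta phi i b).
Proof.
case: HJ => J_min _; have [[_ _ J_ideal] _ _] := J_min.
case: Hw => Jg u_w wg rk_w.
set h := theta delta phi i a *m g *m theta delta phi i b.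
have Jh : J h by apply: J_ideal => //; apply: theta_monoid_theta.
split => //; first exact: infix_trans u_w (infix_infix a w b).
  by rewrite (theta_cat3 HWA) wg.
have [->|/eqP h_neq0] := eqVneq h 0; [by left | right => w' u_w' w'h].
have [x [y gE]] := theta_zero_minimal_ideal_principal HWA J_min Jh h_neq0 Jg.
case: rk_w => [g0|rk_w]; first by case: h_neq0; rewrite /h g0 mulmx0 mul0mx.
apply: leq_trans (leq_rk_infix delta (infix_infix a w b)) _.
apply: leq_trans (leq_rk_infix delta (infix_infix x w' y)).
apply: rk_w; first exact: infix_trans u_w' (infix_infix x w' y).
by rewrite (theta_cat3 HWA) w'h gE.
Qed.
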